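(* Let $(S,K,I)$ be a balanced split graph with $|I|\ge2$ such that $\Phi(S)$ is complete. If $x$ is an inactive vertex of $S$, then $x$ is universal in $S$.
   Context: All graphs are finite and simple. A split graph is a graph $S$ whose vertex set is a disjoint union $V(S)=K\,\dot\cup\,I$ with $K$ a clique and $I$ an independent set; $(K,I)$ is called a bipartition of $S$, and $(S,K,I)$ denotes $S$ together with this fixed bipartition. A 2-switch in a graph $G$ is performed on four distinct vertices $a,b,c,d$ with $ab,cd\in E(G)$ and $ac,bd\notin E(G)$: it deletes $ab,cd$ and adds $ac,bd$; $a,b,c,d$ are said to participate in it. A vertex is active in $G$ if it participates in some 2-switch on $G$, otherwise inactive. A vertex is universal if it is adjacent to all other vertices. For a split graph $(S,K,I)$ and distinct $u,v\in I$, $\sigma_{uv}(S)$ is the number of induced subgraphs of $S$ isomorphic to $P_4$ containing both $u$ and $v$. The factor graph $\Phi(S)$ is the loopless multigraph with vertex set $I$ having exactly $\sigma_{uv}(S)$ parallel edges between $u$ and $v$. Graph notions (connected, complete, etc.) applied to $\Phi(S)$ refer to its underlying simple graph, in which $u\sim v$ iff $\sigma_{uv}(S)\ge1$. A vertex $w$ of $(S,K,I)$ is swing if $N_S(w)=K\setminus\{w\}$. $(S,K,I)$ is balanced if $|K|=\omega(S)$ and $|I|=\alpha(S)$; it is known that $S$ is balanced iff it has no swing vertex. *)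

From mathcomp Require Import all_boot.
Set Implicit Arguments. Unset Strict Implicit. Unset Printing Implicit Defensive.

Section Graphs.
Variables (T : finType) (e : rel T).

Definition simple_graph : Prop := symmetric e /\ irreflexive e.

Definition is_clique (A : {set T}) : bool :=
  [forall x in A, forall y in A, (x != y) ==> e x y].

Definition is_indep (A : {set T}) : bool :=
  [forall x in A, forall y in A, ~~ e x y].

Definition omega : nat := \max_(A : {set T} | is_clique A) #|A|.
Definition alpha : nat := \max_(A : {set T} | is_indep A) #|A|.

Definition split_bipartition (K I : {set T}) : Prop :=
  [/\ K :&: I = set0, K :|: I = setT, is_clique K & is_indep I].

Definition balanced (K I : {set T}) : Prop :=
  #|K| = omega /\ #|I| = alpha.

Definition induces_P4 (A : {set T}) : bool :=
  [exists a : T, exists b : T, exists c : T, exists d : T,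
    [&& A == [set a; b; c; d], uniq [:: a; b; c; d],
        [&& e a b, e b c & e c d] & [&& ~~ e a c, ~~ e b d & ~~ e a d]]].

Definition sigma (u v : T) : nat :=
  #|[set A : {set T} | induces_P4 A && (u \in A) && (v \in A)]|.

(* Phi(S) complete: its underlying simple graph on I is complete *)
Definition factor_graph_complete (I : {set T}) : Prop :=
  forall u v, u \in I -> v \in I -> u != v -> 0 < sigma u v.

(* x participates in some 2-switch *)
Definition active (x : T) : Prop :=
  exists a b c d : T,
    [/\ uniq [:: a; b; c; d], e a b && e c d, ~~ e a c && ~~ e b d
      & x \in [:: a; b; c; d]].

Definition universal (x : T) : Prop := forall y, y != x -> e x y.

End Graphs.

(* If x lies in I, pick another v in I: an induced P4 through x and v exists since Phi(S) is
   complete, and its edges ab, cd together with the non-edges ac, bd form a 2-switch, so x is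
   active.  Hence an inactive x lies in K.  If it missed some u, then u is in I; as S is balanced,
   x is not swing and has a neighbour w in I.  In a split graph an induced P4 has its two ends
   in I and its two inner vertices in K, so the P4 through u and w runs u - y - ... - w with
   uy an edge and yw a non-edge; then uy, xw, ux, yw is a 2-switch through x. *)
From mathcomp Require Import all_boot.

Set Implicit Arguments.
Unset Strict Implicit.
Unset Printing Implicit Defensive.

Section TwoSwitches.
Variables (T : finType) (e : rel T).

Lemma sigma_gt0_P4 (u v : T) : 0 < sigma e u v ->
  exists a b c d, [/\ uniq [:: a; b; c; d], [&& e a b, e b c & e c d],
    [&& ~~ e a c, ~~ e b d & ~~ e a d], u \in [set a; b; c; d] & v \in [set a; b; c; d]].
Proof.
rewrite /sigma card_gt0 => /set0Pn [A]; rewrite inE => /andP [/andP [P4A uA] vA].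
have /existsP [a /existsP [b /existsP [c /existsP [d]]]] := P4A.
by case/and4P => /eqP defA abcd path nonadj; exists a, b, c, d; rewrite -defA.
Qed.

Lemma sigma_gt0_active (u v : T) : 0 < sigma e u v -> active e u.
Proof.
case/sigma_gt0_P4 => a [b [c [d [abcd /and3P [ab _ cd] /and3P [ac bd _] uP _]]]].
exists a, b, c, d; split; rewrite ?ab ?cd ?ac ?bd //.
by move: uP; rewrite !inE -!orbA.
Qed.

Hypotheses (esym : symmetric e) (eirr : irreflexive e).

Lemma switch_active (a b c d : T) : a != c -> b != d ->
  e a b -> e c d -> ~~ e a c -> ~~ e b d ->
  forall z, z \in [:: a; b; c; d] -> active e z.
Proof.
move=> ac bd ab cd nac nbd z zP; exists a, b, c, d; split => //; last first.
- by rewrite nac nbd.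
- by rewrite ab cd.
have neq_adj x y : e x y -> x != y by apply: contraTneq => ->; rewrite eirr.
have ad : a != d by apply/eqP => E; move: nac; rewrite E esym cd.
have bc : b != c by apply/eqP => E; move: nac; rewrite -E ab.
by rewrite /= !inE !negb_or ac bd ad bc !neq_adj.
Qed.

End TwoSwitches.

Section SplitGraphs.
Variables (T : finType) (e : rel T) (K I : {set T}).
Hypotheses (esym : symmetric e) (eirr : irreflexive e).
Hypothesis KI_split : split_bipartition e K I.

Lemma in_K_or_I z : (z \in K) || (z \in I).
Proof. by case: KI_split => _ KuI _ _; rewrite -in_setU KuI inE. Qed.

Lemma in_K_notin_I z : z \in K -> z \notin I.
Proof.
case: KI_split => KI _ _ _ zK; apply/negP => zI.
by have := in_set0 z; rewrite -KI inE zK zI.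
Qed.

Lemma clique_adj x y : x \in K -> y \in K -> x != y -> e x y.
Proof.
case: KI_split => _ _ /forall_inP cK _ xK yK.
by move/forall_inP: (cK x xK) => /(_ y yK) /implyP.
Qed.

Lemma indep_nadj x y : x \in I -> y \in I -> ~~ e x y.
Proof.
case: KI_split => _ _ _ /forall_inP iI xI yI.
by move/forall_inP: (iI x xI) => /(_ y yI).
Qed.

Lemma adj_I_in_K u y : u \in I -> e u y -> y \in K.
Proof.
move=> uI uy; case/orP: (in_K_or_I y) => // yI.
by move: (indep_nadj uI yI); rewrite uy.
Qed.

Lemma nadj_K_in_I x y : x \in K -> ~~ e x y -> x != y -> y \in I.
Proof.
move=> xK nxy xy; case/orP: (in_K_or_I y) => // yK.
by move: nxy; rewrite clique_adj.
Qed.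

Lemma induced_P3_center_in_K a b c :
  a != c -> e a b -> e b c -> ~~ e a c -> b \in K.
Proof.
move=> ac ab bc nac; case/orP: (in_K_or_I b) => // bI.
have aK : a \in K by apply: (adj_I_in_K bI); rewrite esym.
by move: nac; rewrite (clique_adj aK (adj_I_in_K bI bc)).
Qed.

Lemma induced_P4_split_shape a b c d :
  uniq [:: a; b; c; d] -> [&& e a b, e b c & e c d] ->
  [&& ~~ e a c, ~~ e b d & ~~ e a d] ->
  [/\ a \in I, b \in K, c \in K & d \in I].
Proof.
rewrite /= !inE !negb_or => /andP [/and3P [_ ac _] /andP [/andP [_ bd] _]].
move=> /and3P [ab bc cd] /and3P [nac nbd _].
have bK := induced_P3_center_in_K ac ab bc nac.
have cK := induced_P3_center_in_K bd bc cd nbd.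
split=> //; first by apply: nadj_K_in_I cK _ _; rewrite 1?esym 1?eq_sym.
exact: nadj_K_in_I bK nbd bd.
Qed.

(* u and w are the two ends of the induced P4; y is the inner vertex next to u. *)
Lemma sigma_gt0_private_neighbour u w : u \in I -> w \in I -> u != w ->
  0 < sigma e u w -> exists2 y, e u y & ~~ e w y.
Proof.
move=> uI wI uw /sigma_gt0_P4 [a [b [c [d [abcd path nonadj uP wP]]]]].
have [aI bK cK dI] := induced_P4_split_shape abcd path nonadj.
move/and3P: path => [ab _ cd]; move/and3P: nonadj => [nac nbd _].
have endsP z : z \in [set a; b; c; d] -> z \in I -> (z == a) || (z == d).
  rewrite !inE -!orbA => /or4P [-> | /eqP-> | /eqP-> | ->] zI //.
  - by rewrite (negPf (in_K_notin_I bK)) in zI.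
  - by rewrite (negPf (in_K_notin_I cK)) in zI.
  by rewrite orbT.
case/orP: (endsP u uP uI) => /eqP Eu; case/orP: (endsP w wP wI) => /eqP Ew;
  rewrite Eu Ew ?eqxx // in uw.
- by exists b; rewrite ?Eu ?Ew // esym.
- by exists c; rewrite ?Eu ?Ew // esym.
Qed.

Lemma K_has_I_neighbour x : #|I| = alpha e -> x \in K -> exists2 w, w \in I & e x w.
Proof.
move=> Ialpha xK; apply/exists_inP; apply: contraT => /exists_inPn nxI.
have xIindep : is_indep e (x |: I).
  apply/forallP => y; apply/implyP; rewrite in_setU1 => yP.
  apply/forallP => z; apply/implyP; rewrite in_setU1.
  case/orP: yP => [/eqP-> | yI] /orP [/eqP-> | zI].
  - by rewrite eirr.
  - exact: nxI.
  - by rewrite esym nxI.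
  - exact: indep_nadj.
have := @leq_bigmax_cond _ (is_indep e) (fun B => #|B|) _ xIindep.
by rewrite -/(alpha e) -Ialpha cardsU1 (in_K_notin_I xK) ltnn.
Qed.

End SplitGraphs.

Theorem lemma4p1 (T : finType) (e : rel T) (K I : {set T}) :
  simple_graph e ->
  split_bipartition e K I ->
  balanced e K I ->
  1 < #|I| ->
  factor_graph_complete e I ->
  forall x : T, ~ active e x -> universal e x.
Proof.
move=> [esym eirr] KI_split [_ Ialpha] I_gt1 Phi_complete x x_inactive.
have xK : x \in K.
  case/orP: (in_K_or_I KI_split x) => // xI; exfalso.
  have [v vI vx] : exists2 v, v \in I & v != x.
    have [p [q [pI qI pq]]] := card_gt1P I_gt1.
    by case: (eqVneq p x) => [<- | px]; [exists q; rewrite // eq_sym | exists p].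
  by apply/x_inactive/(@sigma_gt0_active _ _ x v)/Phi_complete; rewrite // eq_sym.
move=> u; rewrite eq_sym => xu; apply: contraT => nxu.
have uI := nadj_K_in_I KI_split xK nxu xu.
have [w wI xw] := K_has_I_neighbour esym eirr KI_split Ialpha xK.
have uw : u != w by apply: contraNneq nxu => ->.
have [y uy nwy] :=
  sigma_gt0_private_neighbour esym KI_split uI wI uw (Phi_complete _ _ uI wI uw).
have yw : y != w.
  apply: contraTneq wI => <-; apply: (in_K_notin_I KI_split).
  exact: (adj_I_in_K KI_split uI uy).
have ux : u != x by rewrite eq_sym.
have nux : ~~ e u x by rewrite esym.
have nyw : ~~ e y w by rewrite esym.
case: x_inactive; apply: (switch_active esym eirr ux yw uy xw nux nyw).
by rewrite !inE eqxx !orbT.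
Qed.
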